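(* Let $N=2^n$ and $0\le i<j<N$. Suppose there exists a finite sequence of integers $a_0,a_1,\ldots,a_\ell\in[0,N)$, $\ell\ge0$, with $a_0=i$, $a_\ell=j$, such that for every $m\in[0,\ell)$ one of the following holds: (1) there exist $0\le u<w<n$ with $b_k(a_m)=b_k(a_{m+1})$ for all $k\in[0,n)\setminus\{u,w\}$, $b_u(a_m)=b_w(a_{m+1})=1$ and $b_w(a_m)=b_u(a_{m+1})=0$; or (2) $b_k(a_m)\le b_k(a_{m+1})$ for all $k\in[0,n)$. Then exactly one of the following holds: (a) $\mathrm{w}(\mathbf{g}_j)>\mathrm{w}(\mathbf{g}_i)$, i.e. the first nonzero component of $(S^{(n)}_{j,w})_w$ is at a larger weight than that of $(S^{(n)}_{i,w})_w$; or (b) $\mathrm{w}(\mathbf{g}_j)=\mathrm{w}(\mathbf{g}_i)$ and $s^{(n)}_i>s^{(n)}_j$.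
   Context: All vectors are binary (over $GF(2)$), indices are zero-based. Let $G_N=\begin{pmatrix}1&0\\1&1\end{pmatrix}^{\otimes n}$ for $N=2^n$, with rows $\mathbf{g}_0,\ldots,\mathbf{g}_{N-1}$; $\mathrm{w}(\cdot)$ is Hamming weight. $S^{(n)}_{i,w}$ is the number of words of weight $w$ in $\mathbf{g}_i+\langle\mathbf{g}_{i+1},\ldots,\mathbf{g}_{N-1}\rangle$, and $s^{(n)}_i:=S^{(n)}_{i,\mathrm{w}(\mathbf{g}_i)}$ (the first nonzero entry of $(S^{(n)}_{i,w})_w$). For $i\in[0,N)$, $b_j(i)$ denotes the $j$-th bit of $i$, i.e. $i=\sum_{j=0}^{n-1}b_j(i)2^j$. (The existence of such a sequence is the sufficient condition from the literature for the synthetic channel $W_N^{(i)}$ to be stochastically degraded with respect to $W_N^{(j)}$.) *)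

From HB Require Import structures.
From mathcomp Require Import all_boot all_order all_algebra.
Set Implicit Arguments. Unset Strict Implicit. Unset Printing Implicit Defensive.
Import GRing.Theory.

(* Kernel F = [[1,0],[1,1]] : F a b = 1 iff b <= a (a, b in {0,1}). *)
Definition kernF (a b : nat) : bool := (b <= a)%N.

(* Entry (i,k) of the Kronecker power F^{(x) n}, built recursively as
   G_{n+1} = F (x) G_n, i.e. (A (x) B)[i][k] = A[i/d][k/d] * B[i%d][k%d],
   d = dim B = 2^n. *)
Fixpoint kronG (n i k : nat) : bool :=
  match n with
  | 0 => true
  | n'.+1 => kernF (i %/ 2 ^ n') (k %/ 2 ^ n') && kronG n' (i %% 2 ^ n') (k %% 2 ^ n')
  end.

Local Open Scope ring_scope.

Definition grow (n i : nat) : 'rV['F_2]_(2 ^ n) :=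
  \row_(k < 2 ^ n) (kronG n i k)%:R.

Definition hw (N : nat) (v : 'rV['F_2]_N) : nat := #|[set k : 'I_N | v 0 k != 0]|.

(* The coset g_i + <g_{i+1}, ..., g_{N-1}> as a set of vectors. *)
Definition coset_i (n i : nat) : {set 'rV['F_2]_(2 ^ n)} :=
  (fun A : {set 'I_(2 ^ n)} => grow n i + \sum_(k in A) grow n k) @:
     [set A : {set 'I_(2 ^ n)} | A \subset [set k : 'I_(2 ^ n) | (i < k)%N]].

Definition S_ (n i w : nat) : nat := #|[set v in coset_i n i | hw v == w]|.

Definition s_ (n i : nat) : nat := S_ n i (hw (grow n i)).

Definition bit (j i : nat) : bool := odd (i %/ 2 ^ j).

Definition step (n x y : nat) : Prop :=
  (exists u w : nat, [/\ (u < w < n)%N,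
      (forall k, (k < n)%N -> k != u -> k != w -> bit k x = bit k y),
      bit u x && bit w y & ~~ bit w x && ~~ bit u y])
  \/ (forall k, (k < n)%N -> (bit k x <= bit k y)%N).

From mathcomp Require Import all_boot all_order all_algebra.
From mathcomp Require Import zify.
Set Implicit Arguments. Unset Strict Implicit. Unset Printing Implicit Defensive.

(* Write pop i for the number of ones among the n low bits of i, and
   sexp i := sum over the zero bits t < n of i of 2 ^ (number of ones below t).
   Both sides of the dichotomy are computed in closed form:
     (1) w(g_i) = 2 ^ pop i,                       (hw_grow)
     (2) s_i = 2 ^ sexp i.                         (s_formula)
   Both are proved by induction on n, splitting indices into a low and a high
   half and using the block form G_{2N} = [[G_N, 0], [G_N, G_N]].  For (2), a
   set of positions P lies in g_i + <g_k, k > i> iff its coordinates P G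
   (G is an involution over GF(2)) agree with e_i up to position i; such sets
   have at least 2 ^ pop i elements, and those of exactly that size are
   counted recursively: a zero top bit of i multiplies the count by
   2 ^ (2 ^ pop i), a one top bit leaves it unchanged.
   Finally every allowed step x -> y either increases pop, or keeps pop and
   strictly decreases sexp (a swap moves a one upwards), or keeps the bits of
   x.  This relation ("precedes") is transitive, so it holds between a_0 = i
   and a_l = j; as i <> j, either w(g_i) < w(g_j), or the weights are equal
   and s_j < s_i, which is the exclusive dichotomy. *)

Lemma addnn_exp2 n : (2 ^ n + 2 ^ n = 2 ^ n.+1)%N.
Proof. by rewrite expnS mul2n addnn. Qed.

Definition lo n (q : 'I_(2 ^ n)) : 'I_(2 ^ n.+1) :=
  cast_ord (addnn_exp2 n) (lshift (2 ^ n) q).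
Definition hi n (q : 'I_(2 ^ n)) : 'I_(2 ^ n.+1) :=
  cast_ord (addnn_exp2 n) (rshift (2 ^ n) q).

Lemma val_lo n q : val (@lo n q) = val q. Proof. by []. Qed.
Lemma val_hi n q : val (@hi n q) = (2 ^ n + q)%N. Proof. by []. Qed.

Lemma lo_inj n : injective (@lo n).
Proof. by move=> a b /(congr1 val) /= /val_inj. Qed.
Lemma hi_inj n : injective (@hi n).
Proof. by move=> a b /(congr1 val) /= /addnI /val_inj. Qed.

Lemma lo_lt_hi n (a b : 'I_(2 ^ n)) : (val (lo a) < val (hi b))%N.
Proof. by rewrite /= (leq_trans (ltn_ord a)) ?leq_addr. Qed.

Lemma lo_neq_hi n a b : (@lo n a == hi b) = false.
Proof. by rewrite -val_eqE ltn_eqF ?lo_lt_hi. Qed.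
Lemma hi_neq_lo n a b : (@hi n a == lo b) = false.
Proof. by rewrite eq_sym lo_neq_hi. Qed.

Variant lohi_spec n : 'I_(2 ^ n.+1) -> Type :=
 | LoSpec q : lohi_spec (@lo n q)
 | HiSpec q : lohi_spec (@hi n q).

Lemma lohiP n (p : 'I_(2 ^ n.+1)) : lohi_spec p.
Proof.
case: (splitP (cast_ord (esym (addnn_exp2 n)) p)) => [q|q] /= Hq.
  have -> : p = lo q by apply: val_inj; rewrite /= -Hq.
  exact: LoSpec.
have -> : p = hi q by apply: val_inj; rewrite /= -Hq.
exact: HiSpec.
Qed.

Lemma big_lohi (R : Type) (idx : R) (op : Monoid.com_law idx) n
    (F : 'I_(2 ^ n.+1) -> R) :
  \big[op/idx]_(p < 2 ^ n.+1) F p =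
  op (\big[op/idx]_(q < 2 ^ n) F (lo q)) (\big[op/idx]_(q < 2 ^ n) F (hi q)).
Proof.
rewrite (reindex (cast_ord (addnn_exp2 n))) /=; first by rewrite big_split_ord.
by exists (cast_ord (esym (addnn_exp2 n))) => x _; rewrite ?cast_ordK ?cast_ordKV.
Qed.

Lemma forall_lohi n (f : pred 'I_(2 ^ n.+1)) :
  [forall p, f p] = [forall q, f (lo q)] && [forall q, f (hi q)].
Proof.
apply/forallP/andP => [H|[/forallP H0 /forallP H1] p].
  by split; apply/forallP => q; apply: H.
by case: (lohiP p).
Qed.

(* The block structure G_{2N} = [[G_N, 0], [G_N, G_N]] of the Kronecker power. *)

Lemma div_hi n (a : 'I_(2 ^ n)) : ((2 ^ n + a) %/ 2 ^ n = 1)%N.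
Proof. by rewrite (divnDl _ (dvdnn _)) divnn expn_gt0 /= divn_small. Qed.
Lemma mod_hi n (a : 'I_(2 ^ n)) : ((2 ^ n + a) %% 2 ^ n = a)%N.
Proof. by rewrite modnDl modn_small. Qed.

Lemma kron_lolo n a b : kronG n.+1 (@lo n a) (@lo n b) = kronG n a b.
Proof. by rewrite /= !divn_small ?modn_small. Qed.
Lemma kron_lohi n a b : kronG n.+1 (@lo n a) (@hi n b) = false.
Proof. by rewrite /= div_hi divn_small. Qed.
Lemma kron_hilo n a b : kronG n.+1 (@hi n a) (@lo n b) = kronG n a b.
Proof. by rewrite /= div_hi mod_hi divn_small // modn_small. Qed.
Lemma kron_hihi n a b : kronG n.+1 (@hi n a) (@hi n b) = kronG n a b.
Proof. by rewrite /= !div_hi !mod_hi. Qed.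
Definition kronE := (kron_lolo, kron_lohi, kron_hilo, kron_hihi).

Lemma card_set_sum (T : finType) (b : pred T) : #|[set x | b x]| = (\sum_x b x)%N.
Proof.
by rewrite -sum1_card big_mkcond /=; apply: eq_bigr => x _; rewrite inE; case: (b x).
Qed.

Definition lset n (P : {set 'I_(2 ^ n.+1)}) : {set 'I_(2 ^ n)} := [set q | lo q \in P].
Definition hset n (P : {set 'I_(2 ^ n.+1)}) : {set 'I_(2 ^ n)} := [set q | hi q \in P].
Definition join n (Q0 Q1 : {set 'I_(2 ^ n)}) : {set 'I_(2 ^ n.+1)} :=
  (@lo n @: Q0) :|: (@hi n @: Q1).

Lemma in_join_lo n Q0 Q1 q : (@lo n q \in join Q0 Q1) = (q \in Q0).
Proof.
rewrite /join inE mem_imset; last exact: lo_inj.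
by case: (q \in Q0) => //=; apply/negbTE/imsetP => -[x _ /eqP]; rewrite lo_neq_hi.
Qed.
Lemma in_join_hi n Q0 Q1 q : (@hi n q \in join Q0 Q1) = (q \in Q1).
Proof.
rewrite /join inE (mem_imset _ _ (@hi_inj n)) orbC.
by case: (q \in Q1) => //=; apply/negbTE/imsetP => -[x _ /eqP]; rewrite hi_neq_lo.
Qed.

Lemma join_split n (P : {set 'I_(2 ^ n.+1)}) : join (lset P) (hset P) = P.
Proof.
by apply/setP => p; case: (lohiP p) => q; rewrite ?in_join_lo ?in_join_hi inE.
Qed.
Lemma lset_join n Q0 Q1 : lset (@join n Q0 Q1) = Q0.
Proof. by apply/setP => q; rewrite inE in_join_lo. Qed.
Lemma hset_join n Q0 Q1 : hset (@join n Q0 Q1) = Q1.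
Proof. by apply/setP => q; rewrite inE in_join_hi. Qed.

Lemma big_sets_join (R : Type) (idx : R) (op : Monoid.com_law idx) n
    (F : {set 'I_(2 ^ n.+1)} -> R) :
  \big[op/idx]_(P : {set 'I_(2 ^ n.+1)}) F P =
  \big[op/idx]_(Q0 : {set 'I_(2 ^ n)}) \big[op/idx]_(Q1 : {set 'I_(2 ^ n)}) F (join Q0 Q1).
Proof.
rewrite pair_bigA (reindex (fun Q => join Q.1 Q.2)) //.
exists (fun P => (lset P, hset P)) => [[Q0 Q1]|P] _ /=.
  by rewrite lset_join hset_join.
by rewrite join_split.
Qed.

Lemma card_filter_lohi n (P : {set 'I_(2 ^ n.+1)}) (f : pred 'I_(2 ^ n.+1)) :
  #|[set p in P | f p]| =
  (#|[set q in lset P | f (lo q)]| + #|[set q in hset P | f (hi q)]|)%N.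
Proof.
by rewrite !card_set_sum big_lohi; congr (_ + _)%N; apply: eq_bigr => q _; rewrite inE.
Qed.

Lemma card_lohi n (P : {set 'I_(2 ^ n.+1)}) : #|P| = (#|lset P| + #|hset P|)%N.
Proof.
have E (T : finType) (A : {set T}) : [set x in A | predT x] = A.
  by apply/setP => x; rewrite inE andbT.
by have := card_filter_lohi P predT; rewrite !E.
Qed.

Lemma card_join n (Q0 Q1 : {set 'I_(2 ^ n)}) : #|join Q0 Q1| = (#|Q0| + #|Q1|)%N.
Proof. by rewrite card_lohi lset_join hset_join. Qed.

(* Symmetric difference: the sum of two vectors over GF(2) seen as sets. *)

Definition symdiff (T : finType) (A B : {set T}) : {set T} := (A :\: B) :|: (B :\: A).

Lemma card_symdiff_filter (T : finType) (A B : {set T}) (f : pred T) :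
  (#|[set x in A | f x]| + #|[set x in B | f x]| =
   #|[set x in symdiff A B | f x]| + 2 * #|[set x in A :&: B | f x]|)%N.
Proof.
rewrite !card_set_sum -!big_split /= big_distrr /= -big_split /=.
by apply: eq_bigr => x _; rewrite !inE; case: (x \in A); case: (x \in B); case: (f x).
Qed.

Lemma card_symdiff (T : finType) (Q R : {set T}) :
  (#|Q| + #|symdiff Q R| = #|R| + 2 * #|Q :\: R|)%N.
Proof.
have E (A : {set T}) : [set x in A | predT x] = A.
  by apply/setP => x; rewrite inE andbT.
have := card_symdiff_filter Q R predT; rewrite !E.
by have := cardsID R Q; lia.
Qed.

Lemma symdiffK (T : finType) (A : {set T}) : involutive (symdiff A).
Proof. by move=> B; apply/setP => x; rewrite !inE; case: (x \in A); case: (x \in B). Qed.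

Lemma symdiff_eq0 (T : finType) (A B : {set T}) : (symdiff A B == set0) = (A == B).
Proof.
apply/eqP/eqP => [H|->]; last by apply/setP => x; rewrite !inE; case: (x \in B).
apply/setP => x; have /setP/(_ x) := H; rewrite !inE.
by case: (x \in A); case: (x \in B).
Qed.

(* Coordinates of a set P (viewed as a vector over GF(2)) in the basis of rows
   of G: coord P k is the k-th entry of P * G_N, i.e. the parity of the number
   of p in P with G[p][k] = 1. *)
Definition coord n (P : {set 'I_(2 ^ n)}) (k : 'I_(2 ^ n)) : bool :=
  odd #|[set p in P | kronG n p k]|.

Lemma coord_lo n (P : {set 'I_(2 ^ n.+1)}) k :
  coord P (lo k) = coord (lset P) k (+) coord (hset P) k.
Proof.
rewrite /coord card_filter_lohi oddD.
have E1 : [set q in lset P | kronG n.+1 (lo q) (lo k)] = [set q in lset P | kronG n q k].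
  by apply/setP => q; rewrite !inE kronE.
have E2 : [set q in hset P | kronG n.+1 (hi q) (lo k)] = [set q in hset P | kronG n q k].
  by apply/setP => q; rewrite !inE kronE.
by rewrite E1 E2.
Qed.

Lemma coord_hi n (P : {set 'I_(2 ^ n.+1)}) k : coord P (hi k) = coord (hset P) k.
Proof.
rewrite /coord card_filter_lohi.
have E1 : [set q in lset P | kronG n.+1 (lo q) (hi k)] = set0.
  by apply/setP => q; rewrite !inE kronE andbF.
have E2 : [set q in hset P | kronG n.+1 (hi q) (hi k)] = [set q in hset P | kronG n q k].
  by apply/setP => q; rewrite !inE kronE.
by rewrite E1 E2 cards0.
Qed.

Lemma coord_symdiff n (A B : {set 'I_(2 ^ n)}) k :
  coord (symdiff A B) k = coord A k (+) coord B k.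
Proof. by rewrite /coord -oddD card_symdiff_filter oddD oddM /=; case: odd. Qed.

Lemma coord0 (P : {set 'I_(2 ^ 0)}) k : coord P k = odd #|P|.
Proof.
by rewrite /coord (_ : [set p in P | _] = P) //; apply/setP => x; rewrite !inE andbT.
Qed.

Lemma coord_set0 n k : @coord n set0 k = false.
Proof.
by rewrite /coord (_ : [set p in set0 | _] = set0) ?cards0 //; apply/setP => x; rewrite !inE.
Qed.

(* G is invertible: only the empty set has all coordinates zero. *)
Lemma coord_eq0 n (R : {set 'I_(2 ^ n)}) : (forall k, coord R k = false) -> R = set0.
Proof.
elim: n R => [|n IH] R H.
  have := H ord0; rewrite coord0; have := max_card R; rewrite card_ord.
  by case E : #|R| => [|[|//]] _ // _; apply/eqP; rewrite -cards_eq0 E.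
have H1 : hset R = set0 by apply: IH => k; rewrite -coord_hi.
have H0 : lset R = set0.
  by apply: IH => k; have := coord_lo R k; rewrite H1 coord_set0 addbF H.
rewrite -(join_split R) H0 H1; apply/setP => p.
by case: (lohiP p) => q; rewrite ?in_join_lo ?in_join_hi !inE.
Qed.

(* The set P lies in the coset g_i + <g_k, k > i> iff its coordinates agree
   with the unit vector e_i up to position i (see coset_condE below). *)
Definition coset_cond n (i : nat) (P : {set 'I_(2 ^ n)}) : bool :=
  [forall k : 'I_(2 ^ n), (val k <= i)%N ==> (coord P k == (val k == i))].

Arguments coset_cond : clear implicits.

Lemma coset_cond0 (i : 'I_(2 ^ 0)) (P : {set 'I_(2 ^ 0)}) : coset_cond 0 i P = odd #|P|.
Proof.
have E (k : 'I_(2 ^ 0)) : val k = val i by case: k i => [[|?] ?] [[|?] ?].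
apply/forallP/idP => [/(_ i)|H k]; first by rewrite leqnn eqxx /= coord0 => /eqP.
by rewrite E leqnn eqxx /= coord0 H.
Qed.

Lemma coset_cond_lo n (i : 'I_(2 ^ n)) Q0 Q1 :
  coset_cond n.+1 (lo i) (join Q0 Q1) = coset_cond n i (symdiff Q0 Q1).
Proof.
rewrite /coset_cond forall_lohi.
have -> : [forall q, (val (hi q) <= val (lo i))%N ==>
    (coord (join Q0 Q1) (hi q) == (val (hi q) == val (lo i)))].
  by apply/forallP => q; rewrite leqNgt lo_lt_hi.
by rewrite andbT; apply: eq_forallb => q; rewrite coord_lo lset_join hset_join coord_symdiff.
Qed.

Lemma coset_cond_hi n (i : 'I_(2 ^ n)) Q0 Q1 :
  coset_cond n.+1 (hi i) (join Q0 Q1) = (Q0 == Q1) && coset_cond n i Q1.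
Proof.
rewrite /coset_cond forall_lohi; congr andb.
  have low (q : 'I_(2 ^ n)) : ((val (lo q) <= hi i)%N = true) * ((val (lo q) == hi i) = false).
    by rewrite (ltnW (lo_lt_hi q i)) (ltn_eqF (lo_lt_hi q i)).
  under eq_forallb => q do rewrite !low coord_lo lset_join hset_join /=.
  apply/forallP/eqP => [H|-> q]; last by case: coord.
  apply/eqP; rewrite -symdiff_eq0; apply/eqP/coord_eq0 => k.
  by rewrite coord_symdiff; apply/eqP; apply: H.
apply: eq_forallb => q.
by rewrite coord_hi hset_join /= leq_add2l eqn_add2l.
Qed.

Definition pop m i := (\sum_(t < m) bit t i)%N.
Definition sexp m i := (\sum_(t < m) (~~ bit t i) * 2 ^ pop t i)%N.

Lemma pop_eq m x y : (forall t, (t < m)%N -> bit t x = bit t y) -> pop m x = pop m y.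
Proof. by move=> H; apply: eq_bigr => t _; rewrite H. Qed.

Lemma sexp_eq m x y : (forall t, (t < m)%N -> bit t x = bit t y) -> sexp m x = sexp m y.
Proof.
move=> H; apply: eq_bigr => t _; rewrite H // (@pop_eq t x y) // => s hs.
exact/H/(ltn_trans hs).
Qed.

Lemma popS m x : pop m.+1 x = (pop m x + bit m x)%N.
Proof. by rewrite /pop big_ord_recr. Qed.
Lemma sexpS m x : sexp m.+1 x = (sexp m x + (~~ bit m x) * 2 ^ pop m x)%N.
Proof. by rewrite /sexp big_ord_recr. Qed.

Lemma pop_mono z a b : (a <= b)%N -> (pop a z <= pop b z)%N.
Proof.
move=> /subnK <-; elim: (b - a)%N => [|k IH] //=.
by rewrite addSn popS (leq_trans IH) ?leq_addr.
Qed.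

Lemma bit_lo n (q : 'I_(2 ^ n)) : bit n q = false.
Proof. by rewrite /bit divn_small. Qed.
Lemma bit_hi_top n (q : 'I_(2 ^ n)) : bit n (2 ^ n + q) = true.
Proof. by rewrite /bit div_hi. Qed.
Lemma bit_hi n (q : 'I_(2 ^ n)) t : (t < n)%N -> bit t (2 ^ n + q) = bit t q.
Proof.
move=> ht; rewrite /bit divnDl; last by rewrite dvdn_exp2l // ltnW.
rewrite -{1}(subnK (ltnW ht)) expnD mulnK ?expn_gt0 // oddD oddX /=.
by rewrite subn_eq0 leqNgt ht.
Qed.

Lemma pop_lo n (q : 'I_(2 ^ n)) : pop n.+1 (lo q) = pop n q.
Proof. by rewrite popS val_lo bit_lo addn0. Qed.
Lemma pop_hi n (q : 'I_(2 ^ n)) : pop n.+1 (hi q) = (pop n q).+1.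
Proof. by rewrite popS val_hi bit_hi_top addn1 (pop_eq (bit_hi q)). Qed.
Lemma sexp_lo n (q : 'I_(2 ^ n)) : sexp n.+1 (lo q) = (sexp n q + 2 ^ pop n q)%N.
Proof. by rewrite sexpS val_lo bit_lo mul1n. Qed.
Lemma sexp_hi n (q : 'I_(2 ^ n)) : sexp n.+1 (hi q) = sexp n q.
Proof. by rewrite sexpS val_hi bit_hi_top mul0n addn0 (sexp_eq (bit_hi q)). Qed.

Lemma coset_card_min n (i : 'I_(2 ^ n)) (P : {set 'I_(2 ^ n)}) :
  coset_cond n i P -> (2 ^ pop n i <= #|P|)%N.
Proof.
elim: n i P => [|n IH] i P.
  by rewrite coset_cond0 /pop big_ord0; case: #|P|.
rewrite -(join_split P); case: (lohiP i) => q.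
  rewrite coset_cond_lo card_join pop_lo => /IH /leq_trans; apply.
  have := card_symdiff (lset P) (hset P).
  by have := subset_leq_card (subsetDl (lset P) (hset P)); lia.
rewrite coset_cond_hi card_join pop_hi expnS => /andP[/eqP -> /IH H].
by rewrite mul2n -addnn leq_add.
Qed.

Definition count_coset n (i : nat) (w : nat) : nat :=
  (\sum_(P : {set 'I_(2 ^ n)}) (coset_cond n i P && (#|P| == w)))%N.

(* Low index, first step: substituting Q1 = Q0 + R, the sets of the coset of
   lo q are the pairs (Q0, R) with R in the coset of q at level n. *)
Lemma count_lo_inner n (q : 'I_(2 ^ n)) d (Q0 : {set 'I_(2 ^ n)}) :
  (\sum_(Q1 : {set 'I_(2 ^ n)}) (coset_cond n.+1 (lo q) (join Q0 Q1) && (#|join Q0 Q1| == d)) =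
   \sum_(R : {set 'I_(2 ^ n)}) (coset_cond n q R && (#|R| + 2 * #|Q0 :\: R| == d)))%N.
Proof.
rewrite (reindex_inj (can_inj (symdiffK Q0))); apply: eq_bigr => R _.
by rewrite coset_cond_lo card_join symdiffK card_symdiff.
Qed.

(* Low index, second step: R is a minimum-weight set and Q0 any subset of R,
   which gives 2 ^ (2 ^ pop q) choices of Q0 for each R. *)
Lemma count_lo_subsets n (q : 'I_(2 ^ n)) (R : {set 'I_(2 ^ n)}) :
  (\sum_(Q0 : {set 'I_(2 ^ n)})
      (coset_cond n q R && (#|R| + 2 * #|Q0 :\: R| == 2 ^ pop n q)) =
   (coset_cond n q R && (#|R| == 2 ^ pop n q)) * 2 ^ (2 ^ pop n q))%N.
Proof.
case HC: (coset_cond n q R); last by rewrite big1.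
have HR := coset_card_min HC.
have [HE|HE] := eqVneq #|R| (2 ^ pop n q); last first.
  by rewrite big1 // => Q0 _; apply/eqP; rewrite eqb0; apply/eqP; lia.
rewrite /= mul1n -HE -card_powerset.
have -> : powerset R = [set Q : {set 'I_(2 ^ n)} | Q \subset R].
  by apply/setP => Q; rewrite powersetE ?inE.
rewrite card_set_sum; apply: eq_bigr => Q0 _; rewrite -setD_eq0 -cards_eq0 HE.
by case: #|Q0 :\: R| => [|k] /=; rewrite ?addn0 ?eqxx //; apply/eqP; lia.
Qed.

Lemma count_coset_min n (i : 'I_(2 ^ n)) : count_coset n i (2 ^ pop n i) = (2 ^ sexp n i)%N.
Proof.
elim: n i => [|n IH] i.
  rewrite /pop /sexp !big_ord0 /count_coset (bigD1 setT) //= coset_cond0 cardsT card_ord.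
  rewrite big1 // => P HP; case: andP => // -[_ /eqP E].
  by move: HP; rewrite eqEcard subsetT cardsT card_ord E.
rewrite /count_coset big_sets_join; case: (lohiP i) => q.
  rewrite pop_lo sexp_lo expnD -IH /count_coset big_distrl.
  rewrite (eq_bigr _ (fun Q0 _ => count_lo_inner q _ Q0)) exchange_big.
  by apply: eq_bigr => R _; rewrite count_lo_subsets.
rewrite pop_hi sexp_hi -IH /count_coset exchange_big; apply: eq_bigr => Q1 _.
rewrite (bigD1 Q1) //= big1 => [|Q0 /negbTE HQ]; last by rewrite coset_cond_hi HQ.
rewrite coset_cond_hi eqxx /= card_join addn0 expnS.
have -> : (#|Q1| + #|Q1| == 2 * 2 ^ pop n q) = (#|Q1| == 2 ^ pop n q).
  by apply/eqP/eqP; lia.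
by [].
Qed.

Lemma card_row n (i : 'I_(2 ^ n)) : #|[set k : 'I_(2 ^ n) | kronG n i k]| = (2 ^ pop n i)%N.
Proof.
elim: n i => [|n IH] i.
  have -> : [set k : 'I_(2 ^ 0) | kronG 0 i k] = setT by apply/setP => k; rewrite !inE.
  by rewrite /pop big_ord0 cardsT card_ord.
rewrite card_lohi; case: (lohiP i) => q.
  have -> : lset [set k : 'I_(2 ^ n.+1) | kronG n.+1 (lo q) k] = [set k : 'I_(2 ^ n) | kronG n q k].
    by apply/setP => k; rewrite !inE kronE.
  have -> : hset [set k : 'I_(2 ^ n.+1) | kronG n.+1 (lo q) k] = set0.
    by apply/setP => k; rewrite !inE kronE.
  by rewrite cards0 addn0 IH pop_lo.
have -> : lset [set k : 'I_(2 ^ n.+1) | kronG n.+1 (hi q) k] = [set k : 'I_(2 ^ n) | kronG n q k].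
  by apply/setP => k; rewrite !inE kronE.
have -> : hset [set k : 'I_(2 ^ n.+1) | kronG n.+1 (hi q) k] = [set k : 'I_(2 ^ n) | kronG n q k].
  by apply/setP => k; rewrite !inE kronE.
by rewrite IH pop_hi expnS mul2n addnn.
Qed.

Section GF2.
Import GRing.Theory.
Local Open Scope ring_scope.

Lemma F2_cases (x : 'F_2) : x = 0 \/ x = 1.
Proof. by case: x => [[|[|m]] Hm]; [left|right|]; try exact: val_inj. Qed.
Lemma F2_nat m : (m%:R : 'F_2) = (odd m)%:R.
Proof. by rewrite -(Fp_nat_mod (isT : prime 2)) modn2. Qed.
Lemma F2_addxx (x : 'F_2) : x + x = 0.
Proof. exact: (addrr_pchar2 (pchar_Fp (isT : prime 2))). Qed.
Lemma F2_bool_inj (b1 b2 : bool) : (b1%:R : 'F_2) = b2%:R -> b1 = b2.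
Proof. by case: b1; case: b2 => //= /eqP; rewrite ?oner_eq0 // eq_sym oner_eq0. Qed.
Lemma F2_boolM (b1 b2 : bool) : (b1%:R * b2%:R : 'F_2) = (b1 && b2)%:R.
Proof. by case: b1; case: b2; rewrite /= ?mul1r ?mul0r. Qed.
Lemma F2_bool_neq0 (b : bool) : ((b%:R : 'F_2) != 0) = b.
Proof. by case: b; rewrite /= ?oner_eq0 ?eqxx. Qed.
Lemma F2_boolZ n (b : bool) (v : 'rV['F_2]_n) : b%:R *: v = if b then v else 0.
Proof. by case: b; rewrite ?scale1r ?scale0r. Qed.

Lemma grow_entry n i k : grow n i 0 k = (kronG n i k)%:R.
Proof. exact: mxE. Qed.

Lemma hw_grow n i : (i < 2 ^ n)%N -> hw (grow n i) = (2 ^ pop n i)%N.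
Proof.
move=> hi; rewrite /hw -(card_row (Ordinal hi)).
by congr #|pred_of_set _|; apply/setP => k; rewrite !inE grow_entry F2_bool_neq0.
Qed.

Lemma sum_lohi (R : nmodType) n (F : 'I_(2 ^ n.+1) -> R) :
  \sum_(p < 2 ^ n.+1) F p = \sum_(q < 2 ^ n) F (lo q) + \sum_(q < 2 ^ n) F (hi q).
Proof. exact: big_lohi. Qed.

Lemma kron_involutive n (p q : 'I_(2 ^ n)) :
  \sum_(k < 2 ^ n) ((kronG n p k && kronG n k q)%:R : 'F_2) = (p == q)%:R.
Proof.
elim: n p q => [|n IH] p q.
  have E (a b : 'I_(2 ^ 0)) : a = b by apply: val_inj; case: a b => [[|?] ?] [[|?] ?].
  by rewrite (E p q) (big_pred1 q) => [|k]; rewrite ?eqxx // (E k q) /= eqxx.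
rewrite sum_lohi; case: (lohiP p) => a; case: (lohiP q) => b.
all: under eq_bigr => k _ do rewrite !kronE.
all: under [X in _ + X]eq_bigr => k _ do rewrite !kronE.
- by rewrite (inj_eq (@lo_inj n)) -IH [X in _ + X]big1 ?addr0.
- by rewrite lo_neq_hi !big1 ?addr0 // => k; rewrite andbF.
- by rewrite hi_neq_lo F2_addxx.
- by rewrite (inj_eq (@hi_inj n)) -IH big1 ?add0r // => k; rewrite andbF.
Qed.

Definition vec_of n (P : {set 'I_(2 ^ n)}) : 'rV['F_2]_(2 ^ n) := \row_k ((k \in P)%:R).
Definition supp n (v : 'rV['F_2]_(2 ^ n)) : {set 'I_(2 ^ n)} := [set k | v 0 k != 0].

Lemma vec_ofK n : cancel (@supp n) (@vec_of n).
Proof.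
move=> v; apply/rowP => k; rewrite !mxE inE.
by case: (F2_cases (v 0 k)) => ->; rewrite ?eqxx ?oner_eq0.
Qed.
Lemma suppK n : cancel (@vec_of n) (@supp n).
Proof. by move=> P; apply/setP => k; rewrite inE mxE F2_bool_neq0. Qed.

Lemma hw_vec_of n (P : {set 'I_(2 ^ n)}) : hw (vec_of P) = #|P|.
Proof. by rewrite /hw -/(supp (vec_of P)) suppK. Qed.

Definition vcoord n (v : 'rV['F_2]_(2 ^ n)) (k : 'I_(2 ^ n)) : 'F_2 :=
  \sum_(p < 2 ^ n) v 0 p * (kronG n p k)%:R.

Lemma vcoord_vec_of n (P : {set 'I_(2 ^ n)}) k : vcoord (vec_of P) k = (coord P k)%:R.
Proof.
rewrite /vcoord /coord -F2_nat card_set_sum natr_sum; apply: eq_bigr => p _.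
by rewrite /vec_of mxE F2_boolM.
Qed.

Lemma vcoordD n (u v : 'rV['F_2]_(2 ^ n)) k : vcoord (u + v) k = vcoord u k + vcoord v k.
Proof. by rewrite /vcoord -big_split; apply: eq_bigr => p _; rewrite mxE mulrDl. Qed.

Lemma vcoord_sum n (A : {set 'I_(2 ^ n)}) (M : 'I_(2 ^ n) -> 'rV['F_2]_(2 ^ n)) k :
  vcoord (\sum_(a in A) M a) k = \sum_(a in A) vcoord (M a) k.
Proof. by rewrite /vcoord exchange_big; apply: eq_bigr => p _; rewrite summxE big_distrl. Qed.

Lemma vcoord_grow n (a k : 'I_(2 ^ n)) : vcoord (grow n a) k = (a == k)%:R.
Proof. by rewrite /vcoord -kron_involutive; apply: eq_bigr => p _; rewrite grow_entry F2_boolM. Qed.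

Lemma row_expand n (v : 'rV['F_2]_(2 ^ n)) : v = \sum_(a < 2 ^ n) vcoord v a *: grow n a.
Proof.
apply/rowP => q; rewrite summxE; symmetry.
transitivity (\sum_(p < 2 ^ n) v 0 p * (p == q)%:R); last first.
  by rewrite (bigD1 q) //= eqxx mulr1 big1 ?addr0 // => p /negbTE ->; rewrite mulr0.
under eq_bigr => a _ do rewrite mxE grow_entry /vcoord big_distrl.
rewrite exchange_big; apply: eq_bigr => p _.
by rewrite -kron_involutive big_distrr; apply: eq_bigr => a _; rewrite /= -mulrA F2_boolM.
Qed.

Lemma coset_condE n (i : 'I_(2 ^ n)) (P : {set 'I_(2 ^ n)}) :
  (vec_of P \in coset_i n i) = coset_cond n i P.
Proof.
apply/imsetP/idP => [[A] | HC].
  rewrite inE => /subsetP HA E.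
  apply/forallP => k; apply/implyP => Hk; apply/eqP/F2_bool_inj.
  rewrite -vcoord_vec_of E vcoordD vcoord_sum vcoord_grow big1 ?addr0.
    by rewrite val_eqE eq_sym.
  move=> a /HA; rewrite inE => Ha.
  by rewrite vcoord_grow -val_eqE gtn_eqF ?(leq_ltn_trans Hk Ha).
pose A := [set a : 'I_(2 ^ n) | (i < a)%N && coord P a].
have coord_i : coord P i by move/forallP/(_ i): HC; rewrite leqnn eqxx => /eqP.
have inA a : (a \in A) = coord P a && (a != i).
  rewrite inE; case: (ltnP i a) => Hia /=.
    by rewrite -val_eqE gtn_eqF // andbT.
  move/forallP/(_ a): HC; rewrite Hia /= => /eqP ->.
  by rewrite -val_eqE; case: eqP.
exists A; first by rewrite inE; apply/subsetP => a; rewrite !inE => /andP[].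
rewrite {1}(row_expand (vec_of P)) (bigD1 i) //= vcoord_vec_of coord_i scale1r.
congr (_ + _); rewrite [LHS]big_mkcond [RHS]big_mkcond; apply: eq_bigr => a _.
by rewrite vcoord_vec_of F2_boolZ inA; case: (a != i); case: coord.
Qed.
End GF2.

Lemma S_count n i w : (i < 2 ^ n)%N -> S_ n i w = count_coset n i w.
Proof.
move=> hi; rewrite /S_ card_set_sum /count_coset (reindex (@vec_of n)) /=; last first.
  by exists (@supp n) => x _; rewrite ?suppK ?vec_ofK.
by apply: eq_bigr => P _; rewrite (coset_condE (Ordinal hi)) hw_vec_of.
Qed.

Lemma s_formula n i : (i < 2 ^ n)%N -> s_ n i = (2 ^ sexp n i)%N.
Proof. by move=> hi; rewrite /s_ hw_grow // S_count // (count_coset_min (Ordinal hi)). Qed.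

Lemma bits_inj n x y : (x < 2 ^ n)%N -> (y < 2 ^ n)%N ->
  (forall t, (t < n)%N -> bit t x = bit t y) -> x = y.
Proof.
elim: n x y => [|n IH] x y; first by rewrite expn0 !ltnS !leqn0 => /eqP -> /eqP ->.
move=> Hx Hy H.
have bitS z t : bit t.+1 z = bit t z./2 by rewrite /bit expnS divnMA divn2.
have half_lt z : (z < 2 ^ n.+1)%N -> (z./2 < 2 ^ n)%N.
  by rewrite -divn2 ltn_divLR // mulnC -expnS.
have Hodd : odd x = odd y by have := H 0%N isT; rewrite /bit expn0 !divn1.
have Hhalf : x./2 = y./2 by apply: IH => [||t Ht]; rewrite ?half_lt // -!bitS; apply: H.
by rewrite -(odd_double_half x) -(odd_double_half y) Hodd Hhalf.
Qed.

Section Swap.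
Variables (n u w x y : nat).
Hypotheses (Huw : (u < w)%N) (Hwn : (w < n)%N)
  (Heq : forall k, (k < n)%N -> k != u -> k != w -> bit k x = bit k y)
  (Hux : bit u x) (Hwy : bit w y) (Hwx : ~~ bit w x) (Huy : ~~ bit u y).

Lemma pop_swap t : (t <= n)%N -> pop t x = (pop t y + ((u < t) && (t <= w)))%N.
Proof.
elim: t => [|t IH] Ht; first by rewrite /pop !big_ord0.
rewrite !popS IH ?(ltnW Ht) //.
have [->|Htu] := eqVneq t u.
  by rewrite (negbTE Huy) Hux ltnn ltnSn Huw /=; lia.
have [->|Htw] := eqVneq t w.
  by rewrite (negbTE Hwx) Hwy Huw leqnn ltnS (ltnW Huw) ltnn /=; lia.
have -> : (u < t.+1)%N = (u < t)%N by rewrite ltnS leq_eqVlt eq_sym (negbTE Htu).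
have -> : (t.+1 <= w)%N = (t <= w)%N by rewrite ltn_neqAle Htw.
by rewrite (Heq Ht Htu Htw); lia.
Qed.

Lemma swap_pop : pop n x = pop n y.
Proof. by rewrite pop_swap // (leqNgt n w) Hwn andbF addn0. Qed.

Let term z t := ((~~ bit t z) * 2 ^ pop t z)%N.

(* Comparing the summands of sexp y and sexp x: only positions u and w
   increase y's side, and position u of y is cheaper than position w of x. *)
Lemma swap_term_le (t : 'I_n) :
  (term y t + ((t : nat) == w) * term x w <= term x t + ((t : nat) == u) * term y u)%N.
Proof.
rewrite /term; have [->|Htu] := eqVneq (t : nat) u.
  by rewrite (negbTE Huy) Hux (ltn_eqF Huw) /=; lia.
have [->|Htw] := eqVneq (t : nat) w; first by rewrite (negbTE Hwx) Hwy /=; lia.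
rewrite (Heq (ltn_ord t) Htu Htw) /= !mul0n !addn0 leq_mul2l.
by rewrite leq_exp2l // (@pop_swap t) ?leq_addr ?orbT // ltnW.
Qed.

Lemma swap_term_lt : (term y u < term x w)%N.
Proof.
rewrite /term (negbTE Huy) Hwx !mul1n ltn_exp2l // pop_swap ?(ltnW Hwn) //.
by rewrite Huw leqnn addn1 ltnS pop_mono // ltnW.
Qed.

Lemma swap_sexp : (sexp n y < sexp n x)%N.
Proof.
have delta v c : (v < n)%N -> (\sum_(t < n) ((t : nat) == v) * c = c)%N.
  move=> Hv; rewrite (bigD1 (Ordinal Hv)) //= eqxx mul1n big1 ?addn0 // => t Ht.
  by rewrite (_ : (t : nat) == v = false) //; apply: contraNF Ht => /eqP E; apply/eqP/val_inj.
have Hsum : (\sum_(t < n) (term y t + ((t : nat) == w) * term x w) <=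
              \sum_(t < n) (term x t + ((t : nat) == u) * term y u))%N.
  by apply: leq_sum => t _; apply: swap_term_le.
rewrite !big_split /= !delta // ?(ltn_trans Huw) // in Hsum.
by rewrite -(ltn_add2r (term x w)) (leq_ltn_trans Hsum) // ltn_add2l swap_term_lt.
Qed.
End Swap.

Definition same_bits n x y : bool := [forall t : 'I_n, bit t x == bit t y].

Lemma same_bitsP n x y :
  reflect (forall t, (t < n)%N -> bit t x = bit t y) (same_bits n x y).
Proof.
apply: (iffP forallP) => H t; last exact/eqP/H.
by move=> Ht; apply/eqP/(H (Ordinal Ht)).
Qed.

Lemma incr_bits_pop n x y : (forall t, (t < n)%N -> bit t x <= bit t y)%N ->
  (pop n x <= pop n y ?= iff same_bits n x y)%N.
Proof.
move=> H; apply: leqif_sum => t _.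
by have := H t (ltn_ord t); case: (bit t x); case: (bit t y).
Qed.

Definition precedes n x y : bool :=
  (pop n x < pop n y)%N ||
  (pop n x == pop n y) && ((sexp n y < sexp n x)%N || same_bits n x y).

Lemma precedes_refl n : reflexive (precedes n).
Proof. by move=> x; rewrite /precedes eqxx !ltnn /=; apply/same_bitsP. Qed.

Lemma precedes_trans n : transitive (precedes n).
Proof.
move=> y x z /orP[Hxy|/andP[/eqP Exy Hxy]] /orP[Hyz|/andP[/eqP Eyz Hyz]].
- by rewrite /precedes (ltn_trans Hxy Hyz).
- by rewrite /precedes -Eyz Hxy.
- by rewrite /precedes Exy Hyz.
rewrite /precedes Exy Eyz eqxx ltnn /=.
case/orP: Hxy => [Lxy|/same_bitsP Sxy]; case/orP: Hyz => [Lyz|/same_bitsP Syz].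
- by rewrite (ltn_trans Lyz Lxy).
- by rewrite -(sexp_eq Syz) Lxy.
- by rewrite (sexp_eq Sxy) Lyz.
by apply/orP; right; apply/same_bitsP => t Ht; rewrite Sxy ?Syz.
Qed.

Lemma step_precedes n x y : step n x y -> precedes n x y.
Proof.
case=> [[u [w [/andP[Huw Hwn] Heq /andP[Hux Hwy] /andP[Hwx Huy]]]] | /incr_bits_pop [le_xy eq_xy]].
  by rewrite /precedes (swap_pop Huw Hwn Heq Hux Hwy Hwx Huy) eqxx ltnn
    (swap_sexp Huw Hwn Heq Hux Hwy Hwx Huy).
by rewrite /precedes ltn_neqAle le_xy eq_xy andbT; case: same_bits; rewrite ?orbT.
Qed.

Lemma precedes_last n i (a : seq nat) :
  (forall m, (m < size a)%N -> step n (nth 0%N (i :: a) m) (nth 0%N (i :: a) m.+1)) ->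
  precedes n i (last i a).
Proof.
move=> Hsteps; have Hpath : path (precedes n) i a.
  by apply/(pathP 0%N) => m /Hsteps /step_precedes.
have := mem_last i a; rewrite inE => /predU1P[->|]; first exact: precedes_refl.
exact: (allP (order_path_min (@precedes_trans n) Hpath)).
Qed.

Lemma precedes_neq n x y : (x < 2 ^ n)%N -> (y < 2 ^ n)%N -> x != y ->
  precedes n x y -> (pop n x < pop n y)%N \/ (pop n x = pop n y /\ (sexp n y < sexp n x)%N).
Proof.
move=> Hx Hy Hxy /orP[|/andP[/eqP Epop /orP[Lsexp|/same_bitsP Sxy]]]; [by left|by right|].
by rewrite (bits_inj Hx Hy Sxy) eqxx in Hxy.
Qed.

Lemma exp2_dichotomy p q a b : (p < q)%N \/ (p = q /\ (b < a)%N) ->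
  let A := (2 ^ p < 2 ^ q)%N in let B := (2 ^ q = 2 ^ p) /\ (2 ^ b < 2 ^ a)%N in
  (A \/ B) /\ ~ (A /\ B).
Proof.
rewrite /= !ltn_exp2l // => H; split; first by case: H => [|[->]]; auto.
by case=> Hpq [/eqP]; rewrite eqn_exp2l // => /eqP E; rewrite E ltnn in Hpq.
Qed.

Theorem theorem4 (n i j : nat) (hij : (i < j)%N) (hjN : (j < 2 ^ n)%N)
  (hseq : exists a : seq nat,
      [/\ all (fun x => (x < 2 ^ n)%N) a,
          last i a = j &
          forall m, (m < size a)%N -> step n (nth 0%N (i :: a) m) (nth 0%N (i :: a) m.+1)]) :
  let A := (hw (grow n i) < hw (grow n j))%N in
  let B := (hw (grow n j) = hw (grow n i)) /\ (s_ n j < s_ n i)%N in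
  (A \/ B) /\ ~ (A /\ B).
Proof.
have hiN : (i < 2 ^ n)%N := ltn_trans hij hjN.
rewrite /= (hw_grow hiN) (hw_grow hjN) (s_formula hiN) (s_formula hjN).
apply: exp2_dichotomy; apply: precedes_neq hiN hjN (negbT (ltn_eqF hij)) _.
by case: hseq => a [_ <- Hsteps]; apply: precedes_last.
Qed.
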